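(* The north pole (resp. south pole) of the shape sphere $M^\ast$, i.e. the geometric center of the hemisphere $M^\ast_+$ of positively oriented shapes (resp. $M^\ast_-$ of negatively oriented shapes), is the shape of the positively (resp. negatively) oriented m-triangle with $I=1$ whose individual moments of inertia equal the dual masses: $I_j=\frac12(1-m_j)$, $j=1,2,3$.
   Context: Masses $m_1,m_2,m_3>0$, $m_1+m_2+m_3=1$; m-triangles $(\mathbf a_1,\mathbf a_2,\mathbf a_3)$, $\mathbf a_i\in\mathbb R^3$, $\sum m_i\mathbf a_i=0$, with $I_j=m_j|\mathbf a_j|^2$ and $I=\sum I_j$. Oriented m-triangles carry a unit normal $\mathbf n$; a nondegenerate one is positively oriented if $(\mathbf a_1,\mathbf a_2,\mathbf n)$ is right-handed. The shape space $M^\ast$ (oriented m-triangles with $I=1$ modulo rotation), with the kinematic metric induced from $\sum m_i|d\mathbf a_i|^2$ via lifts of zero angular momentum, is a round sphere of radius $1/2$, divided by the equator of collinear shapes into the closed hemispheres $M^\ast_\pm$ of positively and negatively oriented shapes. *)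

From HB Require Import structures.
From mathcomp Require Import all_boot all_order all_algebra.
From mathcomp Require Import all_classical all_reals all_analysis.
Set Implicit Arguments. Unset Strict Implicit. Unset Printing Implicit Defensive.
Import Order.TTheory GRing.Theory Num.Theory.
Local Open Scope ring_scope.
Local Open Scope classical_set_scope.

Section Defs.
Variable R : realType.

Definition dotv (u v : 'rV[R]_3) : R := (u *m v^T) 0 0.

Definition is_mtriangle (m : 'I_3 -> R) (a : 'I_3 -> 'rV[R]_3) : Prop :=
  \sum_(i < 3) m i *: a i = 0.

Definition inertia_j (m : 'I_3 -> R) (a : 'I_3 -> 'rV[R]_3) (j : 'I_3) : R :=
  m j * dotv (a j) (a j).
Definition inertia (m : 'I_3 -> R) (a : 'I_3 -> 'rV[R]_3) : R :=
  \sum_(j < 3) inertia_j m a j.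

Definition oriented_mtriangle m a (n : 'rV[R]_3) : Prop :=
  is_mtriangle m a /\ dotv n n = 1 /\ forall i, dotv n (a i) = 0.

(* collinear: all vertices on a common line (through the center of mass 0) *)
Definition collinear (a : 'I_3 -> 'rV[R]_3) : Prop :=
  exists u : 'rV[R]_3, forall i, exists t : R, a i = t *: u.

Definition frame_det (a : 'I_3 -> 'rV[R]_3) (n : 'rV[R]_3) : R :=
  \det (\matrix_(i < 3, j < 3) (nth 0 [:: a 0; a 1; n] i) 0 j).

Definition pos_oriented a n : Prop := ~ collinear a /\ 0 < frame_det a n.
Definition neg_oriented a n : Prop := ~ collinear a /\ frame_det a n < 0.

Definition rotation (Q : 'M[R]_3) : Prop := Q *m Q^T = 1 /\ \det Q = 1.

(* Distance in M^* (kinematic metric, quotient by rotations) between the shapes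
   of two oriented m-triangles with I = 1: arccos of the maximal mass-weighted
   inner product over rotations (acting on rows by v |-> v *m Q) matching the
   orientation normals. *)
Definition shape_cos m a n b (n' : 'rV[R]_3) : R :=
  sup [set x : R | exists Q, rotation Q /\ n' *m Q = n /\
         x = \sum_(i < 3) m i * dotv (a i) (b i *m Q)].
Definition shape_dist m a n b n' : R := acos (shape_cos m a n b n').

(* the shape of (a,n) is the center (pole) of the closed hemisphere M^*_+
   (resp. M^*_-): it lies in that hemisphere and is at distance pi/4
   (a quarter great circle of the sphere of radius 1/2) from every point
   of the equator of collinear shapes. *)
Definition is_north_pole m a n : Prop :=
  oriented_mtriangle m a n /\ inertia m a = 1 /\ (pos_oriented a n \/ collinear a) /\
  forall b n', oriented_mtriangle m b n' -> inertia m b = 1 -> collinear b ->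
    shape_dist m a n b n' = pi / 4.
Definition is_south_pole m a n : Prop :=
  oriented_mtriangle m a n /\ inertia m a = 1 /\ (neg_oriented a n \/ collinear a) /\
  forall b n', oriented_mtriangle m b n' -> inertia m b = 1 -> collinear b ->
    shape_dist m a n b n' = pi / 4.

End Defs.

(* For a collinear shape [b_i = t_i u], normalised by [sum m_i t_i = 0] and
   [sum m_i t_i^2 = 1], the best rotation aligns [u] with [w = sum m_i t_i a_i],
   so the cosine of the shape distance from [a] to [b] is [|w|].  Hence [a] is
   at distance pi/4 from the whole equator iff [|w|^2 = 1/2] for all such [t].
   Testing [t_i = delta_ij - m_j] yields [I_j = (1 - m_j)/2]; conversely these
   values force [a_i . a_j = -1/2] for [i <> j], whence
   [|w|^2 = (sum m_i t_i^2 - (sum m_i t_i)^2) / 2 = 1/2].  Such a triangle is not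
   collinear, and an explicit one of either orientation exists. *)

From HB Require Import structures.
From mathcomp Require Import all_boot all_order all_algebra.
From mathcomp Require Import all_classical all_reals all_analysis.
From mathcomp Require Import ring lra.
Set Implicit Arguments. Unset Strict Implicit. Unset Printing Implicit Defensive.
Import Order.TTheory GRing.Theory Num.Theory.
Local Open Scope ring_scope.
Local Open Scope classical_set_scope.

Section Vectors.
Variable R : realType.
Implicit Types (u v w n p q : 'rV[R]_3).

Lemma sum_ord3 (V : nmodType) (F : 'I_3 -> V) :
  \sum_(i < 3) F i = F 0 + F 1 + F 2.
Proof.
rewrite !big_ord_recr big_ord0 /= add0r.
by congr (_ + _ + _); congr F; apply: val_inj.
Qed.

Lemma ord3P (j : 'I_3) : j = 0 \/ j = 1 \/ j = 2.
Proof.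
case: j => [[|[|[|//]]] hj]; [left | right; left | right; right]; exact: val_inj.
Qed.

Lemma det_mx33 (A : 'M[R]_3) : \det A =
  A 0 0 * (A 1 1 * A 2 2 - A 1 2 * A 2 1) - A 0 1 * (A 1 0 * A 2 2 - A 1 2 * A 2 0)
  + A 0 2 * (A 1 0 * A 2 1 - A 1 1 * A 2 0).
Proof.
(* Reading every entry through [inord] makes the [lift]ed indices of the
   expansion compute, so that [ring] identifies equal entries. *)
pose f (i j : nat) := A (inord i) (inord j).
have idx (i j : 'I_3) : A i j = f i j by rewrite /f !inord_val.
rewrite (expand_det_row _ 0) !big_ord_recr big_ord0 /= /cofactor.
rewrite !(expand_det_row _ 0) !big_ord_recr !big_ord0 /= /cofactor.
rewrite !det_mx11 !mxE !idx /bump /= !expr0 sqrrN expr1n.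
by ring.
Qed.

Lemma dotvE u v : dotv u v = u 0 0 * v 0 0 + u 0 1 * v 0 1 + u 0 2 * v 0 2.
Proof. by rewrite /dotv !mxE sum_ord3 !mxE. Qed.

Lemma dotvC u v : dotv u v = dotv v u.
Proof. by rewrite !dotvE; ring. Qed.

Lemma dotvZl c u v : dotv (c *: u) v = c * dotv u v.
Proof. by rewrite !dotvE !mxE; ring. Qed.

Lemma dotvZr c u v : dotv u (c *: v) = c * dotv u v.
Proof. by rewrite !dotvE !mxE; ring. Qed.

Lemma dotvDr u v w : dotv u (v + w) = dotv u v + dotv u w.
Proof. by rewrite !dotvE !mxE; ring. Qed.

Lemma dotv0r u : dotv u 0 = 0.
Proof. by rewrite dotvE !mxE; ring. Qed.

Lemma dotv_ge0 u : 0 <= dotv u u.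
Proof. by rewrite dotvE; nra. Qed.

Definition row3 (x y z : R) : 'rV[R]_3 := \row_(j < 3) nth 0 [:: x; y; z] j.

Definition cross p q : 'rV[R]_3 :=
  row3 (p 0 1 * q 0 2 - p 0 2 * q 0 1) (p 0 2 * q 0 0 - p 0 0 * q 0 2)
       (p 0 0 * q 0 1 - p 0 1 * q 0 0).

Lemma dotv_crossl p q : dotv p (cross p q) = 0.
Proof. by rewrite !dotvE !mxE /=; ring. Qed.

Lemma dotv_crossr p q : dotv q (cross p q) = 0.
Proof. by rewrite !dotvE !mxE /=; ring. Qed.

Lemma dotv_cross p q :
  dotv (cross p q) (cross p q) = dotv p p * dotv q q - dotv p q ^+ 2.
Proof. by rewrite !dotvE !mxE /=; ring. Qed.

Lemma dotv_sqr_le u v : dotv u v ^+ 2 <= dotv u u * dotv v v.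
Proof. by have := dotv_ge0 (cross u v); rewrite dotv_cross subr_ge0. Qed.

Lemma dotv_le_sqrt w v : dotv v v = 1 -> dotv w v <= Num.sqrt (dotv w w).
Proof.
move=> hv; apply: (le_trans (ler_norm _)); rewrite -sqrtr_sqr ler_wsqrtr //.
by have := dotv_sqr_le w v; rewrite hv mulr1.
Qed.

Lemma dotv_self_eq0 w v : dotv w w = 0 -> dotv w v = 0.
Proof.
move=> hw; have := dotv_sqr_le w v; rewrite hw mul0r => h.
by apply/eqP; rewrite -sqrf_eq0 eq_le h sqr_ge0.
Qed.

Definition normalize v := (Num.sqrt (dotv v v))^-1 *: v.

Lemma dotv_normalize v : 0 < dotv v v -> dotv (normalize v) (normalize v) = 1.
Proof.
move=> hv; rewrite dotvZl dotvZr mulrA -expr2 exprVn sqr_sqrtr ?ltW //.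
by rewrite mulVf // gt_eqF.
Qed.

Lemma dotv_normalizer v : 0 < dotv v v -> dotv v (normalize v) = Num.sqrt (dotv v v).
Proof.
move=> hv; rewrite dotvZr -{2}(sqr_sqrtr (ltW hv)) expr2 mulKf // gt_eqF //.
by rewrite sqrtr_gt0.
Qed.

Lemma exists_unit_orthogonal n : dotv n n = 1 ->
  exists v, dotv v v = 1 /\ dotv n v = 0.
Proof.
move=> hn.
suff [v [hv hnv]] : exists v, 0 < dotv v v /\ dotv n v = 0.
  by exists (normalize v); rewrite dotv_normalize // dotvZr hnv mulr0.
set c0 := cross n (row3 1 0 0); set c1 := cross n (row3 0 1 0).
set c2 := cross n (row3 0 0 1).
have hc : dotv c0 c0 + dotv c1 c1 + dotv c2 c2 = 2 * dotv n n.
  by rewrite !dotvE !mxE /=; ring.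
have [h0|h0] := ltP 0 (dotv c0 c0); first by exists c0; rewrite dotv_crossl.
have [h1|h1] := ltP 0 (dotv c1 c1); first by exists c1; rewrite dotv_crossl.
by exists c2; rewrite dotv_crossl; split => //; lra.
Qed.

Definition frame p q : 'M[R]_3 :=
  \matrix_(i < 3, j < 3) (nth 0 [:: p; q; cross p q] i) 0 j.

Lemma row_frame p q i : row i (frame p q) = nth 0 [:: p; q; cross p q] i.
Proof. by apply/rowP => k; rewrite !mxE. Qed.

Lemma mulmx_trE (A B : 'M[R]_3) i j : (A *m B^T) i j = dotv (row i A) (row j B).
Proof. by rewrite /dotv !mxE; apply: eq_bigr => k _; rewrite !mxE. Qed.

Lemma frame_orthogonal p q : dotv p p = 1 -> dotv q q = 1 -> dotv p q = 0 ->
  frame p q *m (frame p q)^T = 1%:M.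
Proof.
move=> hp hq hpq; apply/matrixP => i j; rewrite mulmx_trE !row_frame !mxE.
have hcc : dotv (cross p q) (cross p q) = 1.
  by rewrite dotv_cross hp hq hpq expr0n /= subr0 mulr1.
have hqp : dotv q p = 0 by rewrite dotvC.
have hcp : dotv (cross p q) p = 0 by rewrite dotvC dotv_crossl.
have hcq : dotv (cross p q) q = 0 by rewrite dotvC dotv_crossr.
by case: (ord3P i) => [->|[->|->]]; case: (ord3P j) => [->|[->|->]];
  rewrite /= ?dotv_crossl ?dotv_crossr.
Qed.

Lemma det_frame p q : \det (frame p q) = dotv (cross p q) (cross p q).
Proof. by rewrite det_mx33 !mxE /= !dotvE !mxE /=; ring. Qed.

Lemma mul_frame_tr u p q :
  u *m (frame p q)^T = row3 (dotv u p) (dotv u q) (dotv u (cross p q)).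
Proof.
apply/rowP => k; rewrite !mxE sum_ord3 !mxE.
by case: (ord3P k) => [->|[->|->]]; rewrite /= !dotvE.
Qed.

Lemma row3_mul_frame x y z p q :
  row3 x y z *m frame p q = x *: p + y *: q + z *: cross p q.
Proof. by apply/rowP => k; rewrite !mxE sum_ord3 !mxE. Qed.

Lemma exists_rotation_orthonormal p q p' q' :
  dotv p p = 1 -> dotv q q = 1 -> dotv p q = 0 ->
  dotv p' p' = 1 -> dotv q' q' = 1 -> dotv p' q' = 0 ->
  exists Q, [/\ rotation Q, p *m Q = p' & q *m Q = q'].
Proof.
move=> hp hq hpq hp' hq' hpq'; exists ((frame p q)^T *m frame p' q').
have hO := frame_orthogonal hp hq hpq; have hO' := frame_orthogonal hp' hq' hpq'.
split; first split.
- rewrite trmx_mul trmxK !mulmxA -(mulmxA _ (frame p' q')) hO' mulmx1.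
  exact: mulmx1C.
- rewrite det_mulmx det_tr !det_frame !dotv_cross hp hq hpq hp' hq' hpq'.
  by rewrite expr0n /= subr0 !mulr1.
- rewrite mulmxA mul_frame_tr hp hpq dotv_crossl row3_mul_frame.
  by rewrite scale1r !scale0r !addr0.
- rewrite mulmxA mul_frame_tr hq dotvC hpq dotv_crossr row3_mul_frame.
  by rewrite scale1r !scale0r addr0 add0r.
Qed.

Lemma dotv_rotation Q u v : rotation Q -> dotv (u *m Q) (v *m Q) = dotv u v.
Proof.
by case=> hQ _; rewrite /dotv trmx_mul !mulmxA -(mulmxA u Q) hQ mulmx1.
Qed.

Lemma sup_dotv_unit_orthogonal n w : dotv n n = 1 -> dotv n w = 0 ->
  sup [set x | exists v, [/\ dotv v v = 1, dotv n v = 0 & x = dotv w v]] =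
  Num.sqrt (dotv w w).
Proof.
move=> hn hnw; set S := [set x | _].
have ubS : ubound S (Num.sqrt (dotv w w)).
  by move=> _ [v [hv _ ->]]; exact: dotv_le_sqrt.
have inS : S (Num.sqrt (dotv w w)).
  have [hw|hw] := ltP 0 (dotv w w).
    exists (normalize w); split; [exact: dotv_normalize | | by rewrite dotv_normalizer].
    by rewrite dotvZr hnw mulr0.
  have hw0 : dotv w w = 0 by apply: le_anti; rewrite hw dotv_ge0.
  have [v [hv hnv]] := exists_unit_orthogonal hn.
  by exists v; split; rewrite // hw0 sqrtr0 dotv_self_eq0.
apply: le_anti; apply/andP; split; first by apply: ge_sup => //; exists (Num.sqrt (dotv w w)).
by apply: sup_upper_bound => //; split; exists (Num.sqrt (dotv w w)).
Qed.

End Vectors.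

Section Masses.
Variables (R : realType) (m : 'I_3 -> R).
Implicit Types (a b : 'I_3 -> 'rV[R]_3) (t : 'I_3 -> R).

Definition moment1 t := m 0 * t 0 + m 1 * t 1 + m 2 * t 2.
Definition moment2 t := m 0 * t 0 ^+ 2 + m 1 * t 1 ^+ 2 + m 2 * t 2 ^+ 2.
Definition mcomb a t : 'rV[R]_3 :=
  (m 0 * t 0) *: a 0 + (m 1 * t 1) *: a 1 + (m 2 * t 2) *: a 2.

Lemma dotv_mcomb v a t : dotv v (mcomb a t) =
  m 0 * t 0 * dotv v (a 0) + m 1 * t 1 * dotv v (a 1) + m 2 * t 2 * dotv v (a 2).
Proof. by rewrite /mcomb !dotvDr !dotvZr. Qed.

Lemma mtriangle_dotv v a : is_mtriangle m a ->
  m 0 * dotv v (a 0) + m 1 * dotv v (a 1) + m 2 * dotv v (a 2) = 0.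
Proof. by rewrite /is_mtriangle sum_ord3 => ha; rewrite -!dotvZr -!dotvDr ha dotv0r. Qed.

Lemma mcomb_normE a t : dotv (mcomb a t) (mcomb a t) =
  m 0 * t 0 ^+ 2 * inertia_j m a 0 + m 1 * t 1 ^+ 2 * inertia_j m a 1
  + m 2 * t 2 ^+ 2 * inertia_j m a 2
  + 2 * (m 0 * m 1 * t 0 * t 1 * dotv (a 0) (a 1)
         + m 0 * m 2 * t 0 * t 2 * dotv (a 0) (a 2)
         + m 1 * m 2 * t 1 * t 2 * dotv (a 1) (a 2)).
Proof. by rewrite /mcomb /inertia_j !dotvE !mxE; ring. Qed.

(* Lagrange's identity *)
Lemma mcomb_norm_le a t : (forall i, 0 <= m i) ->
  dotv (mcomb a t) (mcomb a t) <= moment2 t * inertia m a.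
Proof.
move=> hm; rewrite -subr_ge0.
have -> : moment2 t * inertia m a - dotv (mcomb a t) (mcomb a t) =
  m 0 * m 1 * dotv (t 0 *: a 1 - t 1 *: a 0) (t 0 *: a 1 - t 1 *: a 0)
  + m 0 * m 2 * dotv (t 0 *: a 2 - t 2 *: a 0) (t 0 *: a 2 - t 2 *: a 0)
  + m 1 * m 2 * dotv (t 1 *: a 2 - t 2 *: a 1) (t 1 *: a 2 - t 2 *: a 1).
  by rewrite /moment2 /inertia sum_ord3 /inertia_j /mcomb !dotvE !mxE; ring.
by rewrite !addr_ge0 // !mulr_ge0 ?dotv_ge0.
Qed.

Lemma collinear_normal_form b n' :
  oriented_mtriangle m b n' -> inertia m b = 1 -> collinear b ->
  exists t u, [/\ dotv u u = 1, dotv n' u = 0, forall i, b i = t i *: u,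
     moment1 t = 0 & moment2 t = 1].
Proof.
move=> [hb [_ hn'b]] hI [u0 /choice[t ht]].
have hIt : moment2 t * dotv u0 u0 = 1.
  by rewrite -hI /inertia sum_ord3 /inertia_j !ht !dotvZl !dotvZr /moment2; ring.
have hu0 : 0 < dotv u0 u0.
  rewrite lt_def dotv_ge0 andbT; apply/eqP => h0.
  by move: hIt; rewrite h0 mulr0 => /esym/eqP; rewrite oner_eq0.
have hn'u0 : dotv n' u0 = 0.
  have : moment2 t * dotv n' u0 = 0.
    transitivity (m 0 * t 0 * dotv n' (b 0) + m 1 * t 1 * dotv n' (b 1)
                  + m 2 * t 2 * dotv n' (b 2)).
      by rewrite !ht !dotvZr /moment2; ring.
    by rewrite !hn'b; ring.
  move/eqP; rewrite mulf_eq0 => /orP[/eqP h|/eqP //].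
  by move: hIt; rewrite h mul0r => /esym/eqP; rewrite oner_eq0.
have hm1 : moment1 t = 0.
  have : moment1 t * dotv u0 u0 = 0.
    by rewrite -(mtriangle_dotv u0 hb) !ht !dotvZr /moment1; ring.
  by move/eqP; rewrite mulf_eq0 (gt_eqF hu0) orbF => /eqP.
set r := Num.sqrt (dotv u0 u0).
have hr : r != 0 by rewrite gt_eqF // sqrtr_gt0.
have hr2 : r ^+ 2 = dotv u0 u0 by rewrite sqr_sqrtr // ltW.
exists (fun i => t i * r), (normalize u0); split.
- exact: dotv_normalize.
- by rewrite dotvZr hn'u0 mulr0.
- by move=> i; rewrite ht /normalize scalerA mulfK.
- by transitivity (moment1 t * r); [rewrite /moment1; ring | rewrite hm1 mul0r].
- by rewrite -hIt /moment2 -hr2; ring.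
Qed.

Section DualMasses.
Hypothesis hpos : forall i, 0 < m i.
Hypothesis hsum : \sum_(i < 3) m i = 1.

Lemma mass_sum3 : m 0 + m 1 + m 2 = 1.
Proof. by rewrite -sum_ord3. Qed.

Lemma mass_lt1 j : m j < 1.
Proof.
have := mass_sum3; have := hpos 0; have := hpos 1; have := hpos 2.
by case: (ord3P j) => [->|[->|->]]; lra.
Qed.

Lemma inertia_dual a : (forall j, inertia_j m a j = (1 - m j) / 2) -> inertia m a = 1.
Proof. by move=> hIj; rewrite /inertia sum_ord3 !hIj; have := mass_sum3; lra. Qed.

Section Triangle.
Variable a : 'I_3 -> 'rV[R]_3.
Hypothesis ha : is_mtriangle m a.

(* Writing [x_ij] for [m_i m_j (a_i . a_j + 1/2)], the relations
   [sum_j m_j a_i . a_j = 0] become [x_01 + x_02 = x_01 + x_12 = x_02 + x_12 = 0]. *)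
Lemma dotv_vertices_dual : (forall j, inertia_j m a j = (1 - m j) / 2) ->
  [/\ dotv (a 0) (a 1) = - (1 / 2), dotv (a 0) (a 2) = - (1 / 2)
    & dotv (a 1) (a 2) = - (1 / 2)].
Proof.
move=> hIj; have hs := mass_sum3.
have := hIj 0; have := hIj 1; have := hIj 2; rewrite /inertia_j => I2 I1 I0.
have L0 := mtriangle_dotv (a 0) ha; have L1 := mtriangle_dotv (a 1) ha.
have L2 := mtriangle_dotv (a 2) ha.
rewrite (dotvC (a 1) (a 0)) in L1; rewrite (dotvC (a 2) (a 0)) (dotvC (a 2) (a 1)) in L2.
set x01 := m 0 * m 1 * (dotv (a 0) (a 1) + 1 / 2).
set x02 := m 0 * m 2 * (dotv (a 0) (a 2) + 1 / 2).
set x12 := m 1 * m 2 * (dotv (a 1) (a 2) + 1 / 2).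
have h0 : x01 + x02 = 0.
  transitivity (m 0 * (m 0 * dotv (a 0) (a 0) + m 1 * dotv (a 0) (a 1) + m 2 * dotv (a 0) (a 2))
    - m 0 * (m 0 * dotv (a 0) (a 0) - (1 - m 0) / 2) + m 0 * (m 0 + m 1 + m 2 - 1) / 2).
    by rewrite /x01 /x02; ring.
  by rewrite L0 I0 hs; ring.
have h1 : x01 + x12 = 0.
  transitivity (m 1 * (m 0 * dotv (a 0) (a 1) + m 1 * dotv (a 1) (a 1) + m 2 * dotv (a 1) (a 2))
    - m 1 * (m 1 * dotv (a 1) (a 1) - (1 - m 1) / 2) + m 1 * (m 0 + m 1 + m 2 - 1) / 2).
    by rewrite /x01 /x12; ring.
  by rewrite L1 I1 hs; ring.
have h2 : x02 + x12 = 0.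
  transitivity (m 2 * (m 0 * dotv (a 0) (a 2) + m 1 * dotv (a 1) (a 2) + m 2 * dotv (a 2) (a 2))
    - m 2 * (m 2 * dotv (a 2) (a 2) - (1 - m 2) / 2) + m 2 * (m 0 + m 1 + m 2 - 1) / 2).
    by rewrite /x02 /x12; ring.
  by rewrite L2 I2 hs; ring.
have off_diag i j : m i * m j * (dotv (a i) (a j) + 1 / 2) = 0 ->
    dotv (a i) (a j) = - (1 / 2).
  by move/eqP; rewrite mulf_eq0 gt_eqF ?mulr_gt0 //= addr_eq0 => /eqP.
have [hx01 hx02 hx12] : [/\ x01 = 0, x02 = 0 & x12 = 0] by split; lra.
by split; apply: off_diag.
Qed.

Lemma mcomb_norm_dual t : (forall j, inertia_j m a j = (1 - m j) / 2) ->
  dotv (mcomb a t) (mcomb a t) = (moment2 t - moment1 t ^+ 2) / 2.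
Proof.
move=> hIj; have [e01 e02 e12] := dotv_vertices_dual hIj.
by rewrite mcomb_normE !hIj e01 e02 e12 /moment1 /moment2; ring.
Qed.

(* As [sum_i m_i a_i = 0], the test vector [t_i = delta_ij - m_j] isolates [a_j]. *)
Lemma inertia_j_dual_of_mcomb :
  (forall t, moment1 t = 0 -> moment2 t = 1 ->
     dotv (mcomb a t) (mcomb a t) = 1 / 2) ->
  forall j, inertia_j m a j = (1 - m j) / 2.
Proof.
move=> H j; have mj := hpos j; have mj1 := mass_lt1 j.
have e2 : m 2 = 1 - m 0 - m 1 by have := mass_sum3; lra.
set r := Num.sqrt (m j * (1 - m j)).
have hr : r != 0 by rewrite gt_eqF // sqrtr_gt0 mulr_gt0 // subr_gt0.
have hr2 : r ^+ 2 = m j * (1 - m j) by rewrite sqr_sqrtr // mulr_ge0 ?subr_ge0 // ltW.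
pose t i := ((i == j)%:R - m j) / r.
have ht1 : moment1 t = 0.
  by rewrite /moment1 /t; case: (ord3P j) => [->|[->|->]] /=; rewrite e2; ring.
have ht2 : moment2 t = 1.
  transitivity (m j * (1 - m j) / r ^+ 2).
    by rewrite /moment2 /t; case: (ord3P j) => [->|[->|->]] /=; rewrite e2; field.
  by rewrite -hr2 mulfV // expf_neq0.
have hw : mcomb a t = (m j / r) *: a j.
  apply/rowP => k.
  have hk : m 0 * a 0 0 k + m 1 * a 1 0 k + m 2 * a 2 0 k = 0.
    by move: ha; rewrite /is_mtriangle sum_ord3 => /rowP /(_ k); rewrite !mxE.
  transitivity (m j / r * a j 0 k - m j / r * (m 0 * a 0 0 k + m 1 * a 1 0 k + m 2 * a 2 0 k)).
    by rewrite /mcomb /t !mxE; case: (ord3P j) => [->|[->|->]] /=; rewrite e2; ring.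
  by rewrite hk mulr0 subr0 !mxE.
have hq : m j / r * (m j / r) * (1 - m j) = m j.
  transitivity (m j * (m j * (1 - m j)) / r ^+ 2); first by field.
  by rewrite -hr2 mulfK // expf_neq0.
have := H t ht1 ht2; rewrite hw dotvZl dotvZr mulrA => h.
transitivity (m j / r * (m j / r) * (1 - m j) * dotv (a j) (a j)); first by rewrite hq.
by rewrite mulrAC h; ring.
Qed.

End Triangle.

Lemma dual_not_collinear a n : oriented_mtriangle m a n ->
  (forall j, inertia_j m a j = (1 - m j) / 2) -> ~ collinear a.
Proof.
move=> ha hIj hc.
have [t [u [hu _ hat ht1 ht2]]] := collinear_normal_form ha (inertia_dual hIj) hc.
have hw : mcomb a t = u.
  transitivity (moment2 t *: u); last by rewrite ht2 scale1r.
  by rewrite /mcomb !hat !scalerA -!scalerDl /moment2; congr (_ *: _); ring.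
by have := mcomb_norm_dual ha.1 t hIj; rewrite hw hu ht1 ht2; lra.
Qed.

End DualMasses.
End Masses.

Lemma shape_cos_collinear (R : realType) (m : 'I_3 -> R) a n b n' t u :
  oriented_mtriangle m a n -> dotv n' n' = 1 -> dotv u u = 1 -> dotv n' u = 0 ->
  (forall i, b i = t i *: u) ->
  shape_cos m a n b n' = Num.sqrt (dotv (mcomb m a t) (mcomb m a t)).
Proof.
move=> [_ [hn hna]] hn' hu hn'u hb.
have hval Q : \sum_(i < 3) m i * dotv (a i) (b i *m Q) = dotv (mcomb m a t) (u *m Q).
  by rewrite sum_ord3 !hb -!scalemxAl /mcomb !dotvE !mxE; ring.
have hnw : dotv n (mcomb m a t) = 0 by rewrite dotv_mcomb !hna; ring.
rewrite /shape_cos -(sup_dotv_unit_orthogonal hn hnw); congr sup.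
apply/seteqP; split => x /=.
- move=> [Q [hQ [hQn ->]]]; exists (u *m Q); split; rewrite ?hval //.
  + by rewrite dotv_rotation.
  + by rewrite -hQn dotv_rotation.
- move=> [v [hv hnv ->]].
  have [Q [hQ hQn hQu]] := exists_rotation_orthonormal hn' hu hn'u hn hv hnv.
  by exists Q; rewrite hval hQu.
Qed.

Lemma cos_pi4 (R : realType) : cos (pi / 4 : R) = Num.sqrt (1 / 2).
Proof.
have hpi := @pi_gt0 R.
have hpos4 : 0 < cos (pi / 4 : R).
  apply: cos_gt0_pihalf; apply/andP; split.
    by rewrite (lt_le_trans _ (ltW (divr_gt0 hpi _))) // ?oppr_lt0 ?divr_gt0.
  by rewrite ltr_pM2l // ltf_pV2 // ?ltr_nat // posrE.
have h2 : cos (pi / 4 : R) ^+ 2 = 1 / 2.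
  have := @cos_pihalf R.
  have -> : (pi / 2 : R) = pi / 4 + pi / 4 by field.
  rewrite cosD -!expr2 sin2cos2 => h.
  by apply: (@mulfI _ 2); rewrite ?pnatr_eq0 //; lra.
by rewrite -h2 sqrtr_sqr ger0_norm // ltW.
Qed.

Lemma acos_sqrt_pi4 (R : realType) (q : R) : 0 <= q <= 1 ->
  acos (Num.sqrt q) = pi / 4 <-> q = 1 / 2.
Proof.
move=> /andP[hq0 hq1]; split => [h | ->].
  have : Num.sqrt q = Num.sqrt (1 / 2).
    rewrite -cos_pi4 -h acosK // in_itv /= -sqrtr1 ler_wsqrtr // andbT.
    by rewrite (le_trans _ (sqrtr_ge0 q)) // lerN10.
  by move/(congr1 (fun x => x ^+ 2)); rewrite !sqr_sqrtr //; lra.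
rewrite -cos_pi4 cosK // in_itv /= divr_ge0 ?pi_ge0 //=.
by rewrite ler_pdivrMr // ler_peMr ?pi_ge0 //; lra.
Qed.

Section Poles.
Variables (R : realType) (m : 'I_3 -> R).
Hypothesis hpos : forall i, 0 < m i.
Hypothesis hsum : \sum_(i < 3) m i = 1.

Lemma equator_dist_iff a n : oriented_mtriangle m a n -> inertia m a = 1 ->
  (forall b n', oriented_mtriangle m b n' -> inertia m b = 1 -> collinear b ->
     shape_dist m a n b n' = pi / 4) <->
  (forall t, moment1 m t = 0 -> moment2 m t = 1 ->
     dotv (mcomb m a t) (mcomb m a t) = 1 / 2).
Proof.
move=> ha hI; split => [H t ht1 ht2 | H b n' hb hIb hcb].
- pose e1 := row3 1 0 (0 : R); pose e3 := row3 0 0 (1 : R).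
  have he1 : dotv e1 e1 = 1 by rewrite dotvE !mxE /=; ring.
  have he3 : dotv e3 e3 = 1 by rewrite dotvE !mxE /=; ring.
  have he31 : dotv e3 e1 = 0 by rewrite dotvE !mxE /=; ring.
  have hb : oriented_mtriangle m (fun i => t i *: e1) e3.
    split; last by split=> // i; rewrite dotvZr he31 mulr0.
    by rewrite /is_mtriangle sum_ord3 !scalerA -!scalerDl -/(moment1 m t) ht1 scale0r.
  have hIb : inertia m (fun i => t i *: e1) = 1.
    by rewrite -ht2 /inertia sum_ord3 /inertia_j !dotvZl !dotvZr he1 /moment2; ring.
  have hcb : collinear (fun i => t i *: e1) by exists e1 => i; exists (t i).
  have hq : 0 <= dotv (mcomb m a t) (mcomb m a t) <= 1.
    by rewrite dotv_ge0 -ht2 -[X in _ <= X]mulr1 -hI mcomb_norm_le // => i; exact: ltW.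
  apply/(acos_sqrt_pi4 hq).
  by rewrite -(shape_cos_collinear ha he3 he1 he31 (b := fun i => t i *: e1)) //; exact: H.
- have [t [u [hu hn'u hbt ht1 ht2]]] := collinear_normal_form hb hIb hcb.
  rewrite /shape_dist (shape_cos_collinear ha hb.2.1 hu hn'u hbt) H //.
  by apply/acos_sqrt_pi4 => //; lra.
Qed.

Lemma hemisphere_center_iff (P : Prop) a n :
  oriented_mtriangle m a n -> inertia m a = 1 ->
  (oriented_mtriangle m a n /\ inertia m a = 1 /\ (P \/ collinear a) /\
   forall b n', oriented_mtriangle m b n' -> inertia m b = 1 -> collinear b ->
     shape_dist m a n b n' = pi / 4) <->
  (P /\ forall j, inertia_j m a j = (1 - m j) / 2).
Proof.
move=> ha hI; split => [[_ [_ [hP H]]] | [hP hIj]].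
- have hIj := inertia_j_dual_of_mcomb hpos hsum ha.1 ((equator_dist_iff ha hI).1 H).
  split=> //; case: hP => // /(dual_not_collinear hpos hsum ha hIj) [].
- do 3!split => //; first by left.
  apply/(equator_dist_iff ha hI) => t ht1 ht2.
  by rewrite (mcomb_norm_dual hpos hsum ha.1 t hIj) ht1 ht2; lra.
Qed.

Lemma exists_dual_mtriangle (s : R) : s ^+ 2 = 1 ->
  exists a n, [/\ oriented_mtriangle m a n,
    forall j, inertia_j m a j = (1 - m j) / 2 & 0 < s * frame_det a n].
Proof.
move=> hs2.
have m0 := hpos 0; have m1 := hpos 1; have m2 := hpos 2.
have e2 : m 2 = 1 - m 0 - m 1 by have := mass_sum3 hsum; lra.
have m01 : 0 < m 0 + m 1 by rewrite addr_gt0.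
have [h0 h1 h01 h2] : [/\ m 0 != 0, m 1 != 0, m 0 + m 1 != 0 & 1 - m 0 - m 1 != 0].
  by rewrite -e2 !gt_eqF.
pose k := Num.sqrt (1 / (2 * m 0 * m 1 * (m 0 + m 1))).
pose l := Num.sqrt (1 / (2 * m 2 * (m 0 + m 1))).
have hk : 0 < k by rewrite sqrtr_gt0 divr_gt0 // !mulr_gt0.
have hl : 0 < l by rewrite sqrtr_gt0 divr_gt0 // !mulr_gt0.
have hk2 : k ^+ 2 = 1 / (2 * m 0 * m 1 * (m 0 + m 1)).
  by rewrite sqr_sqrtr // ltW // divr_gt0 // !mulr_gt0.
have hl2 : l ^+ 2 = 1 / (2 * m 2 * (m 0 + m 1)).
  by rewrite sqr_sqrtr // ltW // divr_gt0 // !mulr_gt0.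
(* The centre of mass is 0 by construction; [k] and [l] scale the two axes so
   that the moments of inertia are the dual masses. *)
pose a (i : 'I_3) := row3 (nth 0 [:: k * m 1; - (k * m 0); 0] i)
  (nth 0 [:: l * m 2; l * m 2; - (l * (m 0 + m 1))] i) 0.
exists a, (row3 0 0 s); split.
- split; last split.
  + rewrite /is_mtriangle sum_ord3; apply/rowP => c; rewrite !mxE.
    by case: (ord3P c) => [->|[->|->]] /=; ring.
  + by rewrite dotvE !mxE /= -hs2; ring.
  + by move=> i; rewrite dotvE !mxE /=; ring.
- have kk x y : k * x * (k * y) = k ^+ 2 * (x * y) by ring.
  have ll x y : l * x * (l * y) = l ^+ 2 * (x * y) by ring.
  move=> j; rewrite /inertia_j dotvE !mxE.
  by case: (ord3P j) => [->|[->|->]] /=; rewrite ?mulrNN ?kk ?ll ?hk2 hl2 e2;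
    field; rewrite ?h0 ?h1 ?h01 ?h2.
- have -> : s * frame_det a (row3 0 0 s) = s ^+ 2 * (k * l * (m 2 * (m 0 + m 1))).
    by rewrite /frame_det det_mx33 !mxE /=; ring.
  by rewrite hs2 mul1r !mulr_gt0.
Qed.

End Poles.

Local Close Scope classical_set_scope.

Theorem mainTheorem14 (R : realType) (m : 'I_3 -> R)
  (hpos : forall i, 0 < m i) (hsum : \sum_(i < 3) m i = 1) :
  (forall (a : 'I_3 -> 'rV[R]_3) (n : 'rV[R]_3),
     oriented_mtriangle m a n -> inertia m a = 1 ->
     (is_north_pole m a n <->
      (pos_oriented a n /\ forall j, inertia_j m a j = (1 - m j) / 2))) /\
  (forall (a : 'I_3 -> 'rV[R]_3) (n : 'rV[R]_3),
     oriented_mtriangle m a n -> inertia m a = 1 ->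
     (is_south_pole m a n <->
      (neg_oriented a n /\ forall j, inertia_j m a j = (1 - m j) / 2))) /\
  (exists (a : 'I_3 -> 'rV[R]_3) (n : 'rV[R]_3),
     oriented_mtriangle m a n /\ inertia m a = 1 /\ pos_oriented a n /\
     forall j, inertia_j m a j = (1 - m j) / 2) /\
  (exists (a : 'I_3 -> 'rV[R]_3) (n : 'rV[R]_3),
     oriented_mtriangle m a n /\ inertia m a = 1 /\ neg_oriented a n /\
     forall j, inertia_j m a j = (1 - m j) / 2).
Proof.
have pole (s : R) : s ^+ 2 = 1 -> exists a n, [/\ oriented_mtriangle m a n,
    inertia m a = 1, ~ collinear a, 0 < s * frame_det a n
    & forall j, inertia_j m a j = (1 - m j) / 2].
  move=> /(exists_dual_mtriangle hpos hsum) [a [n [ha hIj hdet]]].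
  exists a, n; split=> //; first exact: (inertia_dual hsum hIj).
  exact: (dual_not_collinear hpos hsum ha hIj).
split; [|split; [|split]].
- by move=> a n; apply: hemisphere_center_iff.
- by move=> a n; apply: hemisphere_center_iff.
- have [a [n [ha hI hc hdet hIj]]] := pole 1 (expr1n _ _).
  by exists a, n; rewrite mul1r in hdet.
- have [a [n [ha hI hc hdet hIj]]] := pole (-1) (etrans (sqrrN _) (expr1n _ _)).
  by exists a, n; rewrite mulN1r oppr_gt0 in hdet.
Qed.
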